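(* Let $K\le M$, $S\ge 1$, $\sigma^2>0$, and $\mathrm{EVM}\in(0,1]$. For $\nu=0,\ldots,S-1$ let $\bar{\mathbf{H}}[\nu]\in\mathbb{C}^{M\times K}$ have rank $K$. For $\rho>0$ define $$R_{\Sigma}(\rho)=\frac{1}{S}\sum_{\nu=0}^{S-1}\log_2\det\left(\mathbf{I}_M+\frac{\rho}{\sigma^2}\bar{\mathbf{H}}[\nu]\bar{\mathbf{H}}^{\mathrm{H}}[\nu]\right)-\frac{1}{S}\sum_{\nu=0}^{S-1}\log_2\det\left(\mathbf{I}_M+\frac{\rho\,\mathrm{EVM}^2}{\sigma^2}\bar{\mathbf{H}}[\nu]\bar{\mathbf{H}}^{\mathrm{H}}[\nu]\right).$$ Then $$\lim_{\rho\to\infty}R_{\Sigma}(\rho)=K\log_2\left(\frac{1}{\mathrm{EVM}^2}\right).$$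
   Context: $(\cdot)^{\mathrm{H}}$ denotes conjugate transpose and $\mathbf{I}_M$ the $M\times M$ identity matrix. In the paper, $R_\Sigma$ is the achievable uplink average sum rate of a multi-user MIMO OFDM system with $K$ users, $M$ base-station antennas, $S$ subcarriers, channel matrices $\bar{\mathbf{H}}[\nu]$, transmit power $\rho$, noise variance $\sigma^2$ and user hardware error vector magnitude $\mathrm{EVM}$. *)

From HB Require Import structures.
From mathcomp Require Import all_boot all_order all_algebra.
From mathcomp Require Import all_classical all_reals all_analysis.
From mathcomp Require Import complex.
Set Implicit Arguments. Unset Strict Implicit. Unset Printing Implicit Defensive.
Import Order.TTheory GRing.Theory Num.Theory.
Import numFieldNormedType.Exports.
Local Open Scope ring_scope.

Definition ctrmx (R : rcfType) (m n : nat) (A : 'M[R[i]]_(m, n)) : 'M[R[i]]_(n, m) :=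
  (map_mx (@conjc R) A)^T.

Definition log2 (R : realType) (x : R) : R := ln x / ln 2.

(* log2 det (I_M + c H H^H); the determinant of this Hermitian positive
   definite matrix is a positive real number, we take its real part. *)
Definition log2det (R : realType) (M K : nat) (c : R) (H : 'M[R[i]]_(M, K)) : R :=
  log2 (complex.Re (\det (1%:M + (c%:C)%C *: (H *m ctrmx H)))).

Definition sum_rate (R : realType) (M K S : nat) (H : 'I_S -> 'M[R[i]]_(M, K))
  (sigma2 EVM rho : R) : R :=
  S%:R^-1 * (\sum_(nu < S) log2det (rho / sigma2) (H nu))
  - S%:R^-1 * (\sum_(nu < S) log2det (rho * EVM ^+ 2 / sigma2) (H nu)).

From HB Require Import structures.
From mathcomp Require Import all_boot all_order all_algebra.
From mathcomp Require Import all_classical all_reals all_analysis.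
From mathcomp Require Import complex ring.
Import Order.TTheory GRing.Theory Num.Theory.
Import numFieldNormedType.Exports.
Local Open Scope classical_set_scope.
Local Open Scope ring_scope.

Set Implicit Arguments. Unset Strict Implicit. Unset Printing Implicit Defensive.
Local Open Scope sesquilinear_scope.

(* By Sylvester's identity det (I_M + c H H^H) = det (I_K + c H^H H), and
   diagonalising the Gram matrix H^H H, whose eigenvalues r_1, ..., r_K are
   positive when H has rank K, gives
   log2 det (I_M + c H H^H) = sum_j log2 (1 + c r_j).  The rate is then an
   average of S K differences log2 (1 + rho a) - log2 (1 + rho EVM^2 a) with
   a > 0, each of which tends to log2 (1 / EVM^2) as rho grows. *)

Lemma sylvester_det (R : comNzRingType) m n (A : 'M[R]_(m, n)) (B : 'M[R]_(n, m)) :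
  \det (1%:M + A *m B) = \det (1%:M + B *m A).
Proof.
pose X := block_mx 1%:M (- A) B 1%:M.
pose U := block_mx 1%:M A 0 1%:M.
have detU : \det U = 1 by rewrite det_ublock !det1 mulr1.
have UX : U *m X = block_mx (1%:M + A *m B) 0 B 1%:M.
  by rewrite mulmx_block !mul1mx !mul0mx mulmx1 ?add0r ?addr0 addNr.
have XU : X *m U = block_mx 1%:M 0 B (1%:M + B *m A).
  rewrite mulmx_block !mul1mx ?mul0mx !mulmx1 mulNmx mulmx0 oppr0 ?add0r !addr0.
  by rewrite subrr addrC.
have := congr1 determinant UX; have := congr1 determinant XU.
by rewrite !det_mulmx !det_lblock !det1 detU mul1r mulr1 mulrC => <- <-.
Qed.

Lemma det_1D_scale_normalmx (C : numClosedFieldType) n (G : 'M[C]_n) (c : C) :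
  G \is normalmx -> \det (1%:M + c *: G) = \prod_j (1 + c * spectral_diag G 0 j).
Proof.
move=> /orthomx_spectralP GE.
set P := spectralmx G in GE; set d := spectral_diag G in GE *.
have Pu : P \in unitmx := spectral_unit G.
have diagE : 1%:M + c *: diag_mx d = diag_mx (\row_j (1 + c * d 0 j)).
  apply/matrixP => a b; rewrite !mxE.
  by case: eqP => [->|]; rewrite ?mulr1n ?mulr0n ?mulr0 ?addr0.
have -> : 1%:M + c *: G = invmx P *m (1%:M + c *: diag_mx d) *m P.
  by rewrite mulmxDr mulmxDl mulmx1 mulVmx // -scalemxAr -scalemxAl -GE.
rewrite !det_mulmx det_inv mulrC mulrA mulfV ?mul1r; last by rewrite -unitfE -unitmxE.
by rewrite diagE det_diag; apply: eq_bigr => j _; rewrite mxE.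
Qed.

Section GramSpectrum.
Variables (C : numClosedFieldType) (m k : nat) (H : 'M[C]_(m, k)).

Lemma gram_normalmx : H^t* *m H \is normalmx.
Proof.
apply/hermitian_normalmx/is_hermitianmxP.
by rewrite expr0 scale1r trmx_mul map_mxM trmxCK.
Qed.

Lemma spectral_diag_gramE j :
  spectral_diag (H^t* *m H) 0 j
  = \sum_l `|(H *m (spectralmx (H^t* *m H))^t*) l j| ^+ 2.
Proof.
have := orthomx_spectralP gram_normalmx.
set P := spectralmx _; set d := spectral_diag _; set X := H *m P^t* => GE.
have Pu : P \in unitmx := spectral_unit _.
have dE : diag_mx d = X^t* *m X.
  rewrite /X trmx_mul map_mxM trmxCK !mulmxA -(mulmxA P) -invmx_unitary.
    by rewrite GE !mulmxA mulmxV // mul1mx mulmxK.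
  exact: spectral_unitarymx.
have /matrixP /(_ j j) := dE; rewrite !mxE eqxx mulr1n => ->.
by apply: eq_bigr => l _; rewrite !mxE normCKC.
Qed.

Lemma spectral_diag_gram_ge0 j : 0 <= spectral_diag (H^t* *m H) 0 j.
Proof. by rewrite spectral_diag_gramE sumr_ge0 // => l _; rewrite exprn_ge0. Qed.

Lemma spectral_diag_gram_gt0 j : \rank H = k -> 0 < spectral_diag (H^t* *m H) 0 j.
Proof.
move=> rankH; rewrite lt0r spectral_diag_gram_ge0 andbT spectral_diag_gramE.
set X := H *m _; apply/negP => /eqP /psumr_eq0P colX0.
have X_free : row_free X^T.
  rewrite /row_free mxrank_tr mxrankMfree ?rankH //.
  by rewrite /row_free mxrank_unitary ?trmxC_unitary ?spectral_unitarymx.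
clearbody X; have : row j X^T = 0.
  apply/rowP => l; rewrite !mxE; apply/eqP.
  by rewrite -normr_eq0 -sqrf_eq0 colX0 // => i _; rewrite exprn_ge0.
rewrite rowE => /eqP; rewrite mulmx_free_eq0 // => /eqP /matrixP /(_ 0 j).
by rewrite !mxE !eqxx => /eqP; rewrite oner_eq0.
Qed.

Lemma det_1D_scale_gram (c : C) :
  \det (1%:M + c *: (H *m H^t*)) = \prod_j (1 + c * spectral_diag (H^t* *m H) 0 j).
Proof.
by rewrite scalemxAr sylvester_det -scalemxAl det_1D_scale_normalmx ?gram_normalmx.
Qed.

End GramSpectrum.

Section GramEigenvalues.
Variables (R : rcfType) (m k : nat) (H : 'M[R[i]]_(m, k)).

Definition gram_eigenvalue (j : 'I_k) : R :=
  complex.Re (spectral_diag (ctrmx H *m H) 0 j).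

Lemma ctrmxE : ctrmx H = H^t*.
Proof. by rewrite /ctrmx map_trmx. Qed.

Lemma gram_eigenvalueE j :
  (gram_eigenvalue j)%:C%C = spectral_diag (ctrmx H *m H) 0 j.
Proof.
have := spectral_diag_gram_ge0 H j; rewrite -ctrmxE /gram_eigenvalue.
by case: (spectral_diag _ 0 j) => a b; rewrite lecE /= => /andP[/eqP -> _].
Qed.

Lemma gram_eigenvalue_ge0 j : 0 <= gram_eigenvalue j.
Proof. by rewrite -lecR gram_eigenvalueE ctrmxE spectral_diag_gram_ge0. Qed.

Lemma gram_eigenvalue_gt0 j : \rank H = k -> 0 < gram_eigenvalue j.
Proof. by move=> rankH; rewrite -ltcR gram_eigenvalueE ctrmxE spectral_diag_gram_gt0. Qed.

Lemma det_1D_scale_gram_real (c : R) :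
  \det (1%:M + c%:C%C *: (H *m ctrmx H))
  = (\prod_j (1 + c * gram_eigenvalue j))%:C%C.
Proof.
rewrite ctrmxE det_1D_scale_gram rmorph_prod; apply: eq_bigr => j _.
by rewrite rmorphD rmorph1 rmorphM /= gram_eigenvalueE ctrmxE.
Qed.

End GramEigenvalues.

Lemma ln_prod (R : realType) (I : Type) (s : seq I) (P : pred I) (f : I -> R) :
  (forall i, P i -> 0 < f i) ->
  ln (\prod_(i <- s | P i) f i) = \sum_(i <- s | P i) ln (f i).
Proof.
move=> f_gt0; suff [] : 0 < \prod_(i <- s | P i) f i
    /\ ln (\prod_(i <- s | P i) f i) = \sum_(i <- s | P i) ln (f i) by [].
apply: (big_ind2 (fun x y => 0 < x /\ ln x = y)) => [|x1 _ x2 _ [x1_gt0 <-] [x2_gt0 <-]|].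
- by rewrite ln1.
- by rewrite mulr_gt0 // lnM.
- by move=> i /f_gt0.
Qed.

Lemma log2det_gram (R : realType) m k (H : 'M[R[i]]_(m, k)) (c : R) : 0 <= c ->
  log2det c H = \sum_j log2 (1 + c * gram_eigenvalue H j).
Proof.
move=> c_ge0; rewrite /log2det det_1D_scale_gram_real /= /log2 ln_prod ?mulr_suml //.
by move=> j _; rewrite ltr_pwDl // mulr_ge0 // gram_eigenvalue_ge0.
Qed.

Lemma log2_ratio_cvg (R : realType) (a b : R) : 0 < a -> 0 < b ->
  log2 (1 + x * a) - log2 (1 + x * b) @[x --> +oo] --> log2 (a / b).
Proof.
move=> a_gt0 b_gt0.
have inv_cvg : x^-1 @[x --> +oo] --> (0 : R).
  by apply/gtr0_cvgV0; [near=> x | exact: cvg_id].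
have shift_cvg (c : R) : x^-1 + c @[x --> +oo] --> c.
  by rewrite -[c in _ --> c]add0r; apply: cvgD; [exact: inv_cvg | exact: cvg_cst].
have ratio_cvg : log2 ((x^-1 + a) / (x^-1 + b)) @[x --> +oo] --> log2 (a / b).
  apply: cvgMr_tmp; apply: continuous_cvg; first exact/continuous_ln/divr_gt0.
  by apply: cvgM (shift_cvg a) (cvgV _ (shift_cvg b)); rewrite gt_eqF.
apply: cvg_trans ratio_cvg; apply: near_eq_cvg; near=> x.
have x_gt0 : 0 < x by [].
have pos c : 0 < c -> 0 < 1 + x * c by move=> c_gt0; rewrite addr_gt0 ?mulr_gt0.
rewrite /log2 -mulrBl -ln_div ?posrE ?pos //; congr (ln _ / _).
by field; rewrite !gt_eqF ?pos.
Unshelve. all: by end_near.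
Qed.

Lemma sum_rateE (R : realType) (M K S : nat) (H : 'I_S -> 'M[R[i]]_(M, K))
    (sigma2 EVM rho : R) :
  0 < sigma2 -> 0 <= rho ->
  sum_rate H sigma2 EVM rho = S%:R^-1 * \sum_nu \sum_j
    (log2 (1 + rho * (gram_eigenvalue (H nu) j / sigma2))
     - log2 (1 + rho * (EVM ^+ 2 * (gram_eigenvalue (H nu) j / sigma2)))).
Proof.
move=> sigma2_gt0 rho_ge0; rewrite /sum_rate -mulrBr -sumrB; congr (_ * _).
apply: eq_bigr => nu _.
rewrite !log2det_gram ?divr_ge0 ?(mulr_ge0 rho_ge0 (sqr_ge0 EVM)) ?(ltW sigma2_gt0) //.
rewrite -(sumrB (index_enum _)); apply: eq_bigr => j _.
by congr (log2 (1 + _) - log2 (1 + _)); ring.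
Qed.

Theorem corollary1 (R : realType) (M K S : nat) (sigma2 EVM : R)
  (H : 'I_S -> 'M[R[i]]_(M, K)) :
  (K <= M)%N -> (1 <= S)%N -> 0 < sigma2 -> 0 < EVM <= 1 ->
  (forall nu : 'I_S, \rank (H nu) = K) ->
  sum_rate H sigma2 EVM rho @[rho --> +oo] --> K%:R * log2 (EVM ^+ 2)^-1.
Proof.
move=> _ S_gt0 sigma2_gt0 /andP[EVM_gt0 _] rankH.
set L := log2 (EVM ^+ 2)^-1.
pose r nu j := gram_eigenvalue (H nu) j / sigma2.
have term_cvg nu j :
    log2 (1 + rho * r nu j) - log2 (1 + rho * (EVM ^+ 2 * r nu j)) @[rho --> +oo] --> L.
  have r_gt0 : 0 < r nu j by rewrite divr_gt0 ?gram_eigenvalue_gt0.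
  have -> : L = log2 (r nu j / (EVM ^+ 2 * r nu j)).
    by rewrite invfM mulrCA mulfV ?mulr1 ?gt_eqF.
  exact: log2_ratio_cvg r_gt0 (mulr_gt0 (exprn_gt0 2 EVM_gt0) r_gt0).
have -> : K%:R * L = S%:R^-1 * \sum_(nu < S) \sum_(j < K) L.
  rewrite !sumr_const !card_ord -(mulr_natl (L *+ K)) -(mulr_natl L).
  by rewrite mulKf // pnatr_eq0 -lt0n.
have sum_cvg : S%:R^-1 * \sum_nu \sum_j
      (log2 (1 + rho * r nu j) - log2 (1 + rho * (EVM ^+ 2 * r nu j)))
    @[rho --> +oo] --> S%:R^-1 * \sum_(nu < S) \sum_(j < K) L.
  apply: cvgMl_tmp; apply: cvg_big => [|nu _]; first exact: add_continuous.
  by apply: cvg_big => [|j _]; [exact: add_continuous | exact: term_cvg].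
apply: cvg_trans sum_cvg.
apply: near_eq_cvg; near=> rho; apply/esym/sum_rateE => //; exact: ltW.
Unshelve. all: by end_near.
Qed.
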